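(* Let $\Theta$ be a nuclear contracting Dwork operator on $M^*$, and let $b$ be a positive integer with $b\le b_\sigma$, and $c,c_1$ rational numbers, such that $\Theta(M^*(b,c))\subset M^*(qb,c+c_1)$. Let $G=(G_{\{u,j_1\},\{v,j_2\}})$ be the matrix of the $K$-linear map induced by $\Theta$ on $M^*(b,0)\otimes K$ with respect to the basis $\{\pi^{b|u|}X^ue_j^*\}$, i.e. $\Theta(\pi^{b|v|}X^ve_{j_2}^* )=\sum_{u,j_1}G_{\{u,j_1\},\{v,j_2\}}\pi^{b|u|}X^ue_{j_1}^*$. Then for every constant $C>0$, except for finitely many row indices $\{u,j_1\}$, we have $\mathrm{ord}_\pi G_{\{u,j_1\},\{v,j_2\}}\ge C$ for all column indices $\{v,j_2\}$.
   Context: $R$ is a complete discrete valuation ring of characteristic $0$ with uniformizer $\pi$, residue field $\mathbf{F}_q$, fraction field $K$, valuation $\mathrm{ord}_\pi$, $|a|_\pi=p^{-\mathrm{ord}_\pi a}$. Fix $n\ge1$; $X^u=\prod X_i^{u_i}$, $|u|=\sum u_i$ for $u\in\mathbf{Z}^n_{\ge0}$. $A_0=\{\sum a_uX^u:a_u\in R,\ |a_u|_\pi\to0\}$ with Gauss norm $\|\cdot\|$ (max of $|a_u|_\pi$), $A=\{\sum a_uX^u\in A_0:\liminf_{|u|\to\infty}\mathrm{ord}_\pi a_u/|u|>0\}$. $\sigma$ is an $R$-algebra endomorphism of $A_0$ with $\sigma(X_i)=X_i^q+\pi f_i$, $f_i\in A$. For $b>0,c$: $L(b,c)=\{\sum a_vX^v:\mathrm{ord}_\pi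 a_v\ge b|v|+c\}$; $b_\sigma>0$ is a fixed rational with $\pi f_i\in L(b_\sigma,0)$ for all $i$. Let $\{e_j^*\}$ be indexed by an at most countable set and $M^*=\{\sum_ja_je_j^*:a_j\in A_0,\ \|a_j\|\to0\}$ (the continuous dual $\mathrm{Hom}^{\mathrm{cont}}_{A_0}(M,\Omega^nA_0)$ of a Banach module $M$ with formal basis $\{e_j\}$, with $e_j^*$ the dual basis), $M^{*\dagger}=\{\sum a_je_j^*\in M^*:a_j\in A\}$, $M^*(b,c)=\{\sum a_je_j^*\in M^*: a_j\in L(b,c)\}$. A Dwork operator on $M^*$ is a continuous $R$-linear endomorphism $\Theta$ of $M^*$ with $\Theta(\sigma(a)f)=a\Theta(f)$ ($a\in A_0$, $f\in M^*$). Writing $\Theta(X^ve_{j_2}^* )=\sum_{u,j_1}G^*_{\{u,j_1\},\{v,j_2\}}X^ue_{j_1}^*$ with $G^*\in R$, $\Theta$ is nuclear if for each fixed $u,v$, $\lim_{j_1\to\infty}\inf_{j_2}\mathrm{ord}_\pi G^*_{\{u,j_1\},\{v,j_2\}}=\infty$. $\Theta$ is contracting if there are rationals $b>0,c,c_1$ with $\Theta(M^*(b,c))\subset M^*(qb,c+c_1)$. *)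

From HB Require Import structures.
From mathcomp Require Import all_boot all_order all_algebra.
From mathcomp Require Import fraction.
Set Implicit Arguments. Unset Strict Implicit. Unset Printing Implicit Defensive.
Import Order.TTheory GRing.Theory Num.Theory.
Local Open Scope ring_scope.

(* pi^k divides x in R, i.e. ord_pi x >= k. *)
Definition pdiv (R : idomainType) (pi : R) (k : nat) (x : R) : Prop :=
  exists y : R, x = pi ^+ k * y.

(* ord_pi x >= r for a rational r (ord_pi is integer valued, ord 0 = +oo). *)
Definition ordge (R : idomainType) (pi : R) (x : R) (r : rat) : Prop :=
  exists k : nat, r <= k%:R /\ pdiv pi k x.

Definition cofin (T : eqType) (P : T -> Prop) : Prop :=
  exists s : seq T, forall x, x \notin s -> P x.

Definition is_cdvr (R : idomainType) (pi : R) (q : nat) : Prop :=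
  (pi != 0) /\ (pi \notin GRing.unit) /\
      (forall x : R, x != 0 -> exists (u : R) (k : nat),
          u \in GRing.unit /\ x = u * pi ^+ k) /\
      (forall m : nat, (m.+1)%:R != 0 :> R) /\
      (* completeness: pi-adically Cauchy sequences converge *)
      (forall s : nat -> R, (forall k, pdiv pi k (s k.+1 - s k)) ->
          exists l : R, forall k, pdiv pi k (l - s k)) /\
      (* residue field R/piR has exactly q elements *)
      (exists reps : seq R, size reps = q /\
          (forall i j, (i < q)%N -> (j < q)%N -> i <> j ->
              ~ pdiv pi 1 (nth 0 reps i - nth 0 reps j)) /\
          (forall x : R, exists2 r, r \in reps & pdiv pi 1 (x - r))).

Definition toK (R : idomainType) (x : R) : {fraction R} := @FracField.tofrac R x.

Definition ordK_ge (R : idomainType) (pi : R) (y : {fraction R}) (C : rat) : Prop :=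
  exists (e : int) (x : R), y = (toK pi) ^ e * toK x /\ ordge pi x (C - e%:~R).

Definition mon (n : nat) := {ffun 'I_n -> nat}.
Definition mdeg (n : nat) (u : mon n) : nat := (\sum_(i < n) u i)%N.

(* a formal power series sum_u a_u X^u is represented by its coefficients *)
Definition ps (n : nat) (R : idomainType) := mon n -> R.

Definition inA0 (n : nat) (R : idomainType) (pi : R) (a : ps n R) : Prop :=
  forall k : nat, cofin (fun u => pdiv pi k (a u)).

Definition inA (n : nat) (R : idomainType) (pi : R) (a : ps n R) : Prop :=
  inA0 pi a /\ exists eps : rat, 0 < eps /\
     cofin (fun u : mon n => ordge pi (a u) (eps * (mdeg u)%:R)).

Definition inL (n : nat) (R : idomainType) (pi : R) (b c : rat) (a : ps n R) : Prop :=
  forall v : mon n, ordge pi (a v) (b * (mdeg v)%:R + c).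

Definition psmul (n : nat) (R : idomainType) (a a' : ps n R) : ps n R :=
  fun w => \sum_(u : {ffun 'I_n -> 'I_(mdeg w).+1} | [forall i, (u i <= w i)%N])
             a [ffun i => nat_of_ord (u i)] * a' [ffun i => (w i - u i)%N].

Definition Xmon (n : nat) (R : idomainType) (v : mon n) : ps n R :=
  fun u => if u == v then 1 else 0.

Definition unitmon (n : nat) (i : 'I_n) (k : nat) : mon n :=
  [ffun j => if j == i then k else 0%N].

Definition is_frob (n : nat) (R : idomainType) (pi : R) (q : nat)
    (sigma : ps n R -> ps n R) (f : 'I_n -> ps n R) : Prop :=
  (forall a, inA0 pi a -> inA0 pi (sigma a)) /\
     (
      forall a a', inA0 pi a -> inA0 pi a' ->
         forall u, sigma (fun w => a w + a' w) u = sigma a u + sigma a' u) /\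
     (
      forall (r : R) a, inA0 pi a ->
         forall u, sigma (fun w => r * a w) u = r * sigma a u) /\
     (
      forall a a', inA0 pi a -> inA0 pi a' ->
         forall u, sigma (psmul a a') u = psmul (sigma a) (sigma a') u) /\
     (
      forall u, sigma (Xmon R [ffun=> 0%N]) u = Xmon R [ffun=> 0%N] u) /\
     (
      forall i u, sigma (Xmon R (unitmon i 1)) u =
                  Xmon R (unitmon i q) u + pi * f i u).

(* The module M^* : sum_j a_j e_j^*, a_j in A_0, ||a_j|| -> 0               *)

Definition Mel (n : nat) (R : idomainType) (J : countType) := J -> ps n R.

Definition inM (n : nat) (R : idomainType) (pi : R) (J : countType)
    (F : Mel n R J) : Prop :=
  forall k : nat, cofin (fun p : mon n * J => pdiv pi k (F p.2 p.1)).

Definition inMbc (n : nat) (R : idomainType) (pi : R) (J : countType)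
    (b c : rat) (F : Mel n R J) : Prop :=
  inM pi F /\ forall j, inL pi b c (F j).

Definition Mact (n : nat) (R : idomainType) (J : countType)
    (a : ps n R) (F : Mel n R J) : Mel n R J := fun j => psmul a (F j).

Definition ebasis (n : nat) (R : idomainType) (J : countType)
    (v : mon n) (j2 : J) : Mel n R J :=
  fun j u => if (j == j2) && (u == v) then 1 else 0.

Definition dwork_op (n : nat) (R : idomainType) (pi : R) (J : countType)
    (sigma : ps n R -> ps n R) (Theta : Mel n R J -> Mel n R J) : Prop :=
  (forall F, inM pi F -> inM pi (Theta F)) /\
  (forall F F', inM pi F -> inM pi F' -> forall j u,
     Theta (fun j' w => F j' w + F' j' w) j u = Theta F j u + Theta F' j u) /\
  (forall (r : R) F, inM pi F -> forall j u,
     Theta (fun j' w => r * F j' w) j u = r * Theta F j u) /\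
  (forall F, inM pi F -> forall k : nat, exists k' : nat, forall F',
     inM pi F' -> (forall j u, pdiv pi k' (F' j u - F j u)) ->
     forall j u, pdiv pi k (Theta F' j u - Theta F j u)) /\
  (forall a F, inA0 pi a -> inM pi F -> forall j u,
     Theta (Mact (sigma a) F) j u = Mact a (Theta F) j u).

(* matrix G^* : Theta(X^v e_{j2}^* ) = sum G^*_{(u,j1),(v,j2)} X^u e_{j1}^* *)
Definition Gstar (n : nat) (R : idomainType) (J : countType)
    (Theta : Mel n R J -> Mel n R J) (u : mon n) (j1 : J) (v : mon n) (j2 : J) : R :=
  Theta (ebasis R v j2) j1 u.

Definition nuclear (n : nat) (R : idomainType) (pi : R) (J : countType)
    (Theta : Mel n R J -> Mel n R J) : Prop :=
  forall (u v : mon n) (N : nat),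
    cofin (fun j1 : J => forall j2 : J, pdiv pi N (Gstar Theta u j1 v j2)).

Definition contracting (n : nat) (R : idomainType) (pi : R) (q : nat) (J : countType)
    (Theta : Mel n R J -> Mel n R J) : Prop :=
  exists b c c1 : rat, 0 < b /\
    forall F, inMbc pi b c F -> inMbc pi (q%:R * b) (c + c1) (Theta F).

(* Matrix G of the K-linear map induced by Theta on M^*(b,0) (x) K in the
   basis pi^{b|u|} X^u e_j^*: it is the element of K with
   G * pi^{b|u|} = pi^{b|v|} * G^*. *)
Definition Gmat (n : nat) (R : idomainType) (pi : R) (J : countType)
    (Theta : Mel n R J -> Mel n R J) (b : nat)
    (u : mon n) (j1 : J) (v : mon n) (j2 : J) : {fraction R} :=
  toK (pi ^+ (b * mdeg v) * Gstar Theta u j1 v j2) / toK (pi ^+ (b * mdeg u)).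

(* Split the rows (u, j1) of G by the degree |u|.  When |u| is large,
   contraction applied to pi^(b|v| + k) X^v e_j2^* (which lies in M^*(b, c)
   once k >= c) gives ord G >= (q - 1) b |u| + c + c1 - k >= |u| + c + c1 - k,
   since q >= 2.  The remaining u are finitely many; for each of them the
   factor pi^(b|v|) handles the columns of large degree |v|, and nuclearity
   handles the finitely many remaining (u, v), away from finitely many j1.
   Of the hypotheses on Theta only R-linearity, the contraction inclusion for
   this b, and nuclearity are needed. *)

From Pilot Require Import Defs.
From HB Require Import structures.
From mathcomp Require Import all_boot all_order all_algebra.
From mathcomp Require Import fraction.
From mathcomp Require Import ring lra zify.
Set Implicit Arguments. Unset Strict Implicit. Unset Printing Implicit Defensive.
Import Order.TTheory GRing.Theory Num.Theory.
Local Open Scope ring_scope.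

Lemma exists_nat_ge (r : rat) : exists k : nat, r <= k%:R.
Proof.
exists (Num.Def.archi_bound `|r|).
by apply: le_trans (ler_norm r) _; apply: ltW; exact: archi_boundP.
Qed.

Lemma cofin_forall_in (X T : eqType) (s : seq X) (P : X -> T -> Prop) :
  (forall x, x \in s -> cofin (P x)) ->
  cofin (fun t => forall x, x \in s -> P x t).
Proof.
elim: s => [|x s IHs] Ps; first by exists [::].
have [t0 Pt0] := Ps x (mem_head x s).
have [t Pt] := IHs (fun y ys => Ps y (@mem_behead _ (x :: s) y ys)).
exists (t0 ++ t) => y; rewrite mem_cat negb_or => /andP[yNt0 yNt] z.
by rewrite inE => /orP[/eqP->|zs]; [exact: Pt0 | exact: Pt].
Qed.

Lemma cofin_pair (X Y : eqType) (s : seq X) (P : X * Y -> Prop) :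
  (forall x, x \notin s -> forall y, P (x, y)) ->
  (forall x, x \in s -> cofin (fun y => P (x, y))) -> cofin P.
Proof.
move=> PNs Ps; have [t Pt] := cofin_forall_in Ps.
exists [seq (x, y) | x <- s, y <- t] => -[x y] xyN.
have [xs|xNs] := boolP (x \in s); last exact: PNs.
have yNt : y \notin t.
  by apply: contra xyN => yt; exact: (allpairs_f (fun a b => (a, b)) xs yt).
exact: Pt.
Qed.

Lemma mdeg_lt_finite (n U : nat) :
  exists s : seq (mon n), forall u, (mdeg u < U)%N -> u \in s.
Proof.
exists [seq [ffun i => nat_of_ord (g i)] | g : {ffun 'I_n -> 'I_U}] => u uU.
have uiU i : (u i < U)%N.
  by apply: leq_ltn_trans uU; rewrite /mdeg (bigD1 i) //= leq_addr.
apply/mapP; exists [ffun i => Ordinal (uiU i)]; first by rewrite mem_enum.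
by apply/ffunP => i; rewrite !ffunE.
Qed.

Lemma is_cdvr_q_gt1 (R : idomainType) (pi : R) (q : nat) :
  is_cdvr pi q -> (1 < q)%N.
Proof.
(* 0 and 1 cannot share a residue, since pi is not a unit. *)
move=> [_ [pi_nunit [_ [_ [_ [reps [<- [_ reps_cover]]]]]]]].
have [r0 r0_in [y0 E0]] := reps_cover 0.
have [r1 r1_in [y1 E1]] := reps_cover 1.
case: reps {reps_cover} r0_in r1_in => [|r [|? ?]] //.
rewrite !mem_seq1 => /eqP r0E /eqP r1E; move: E0 E1; rewrite r0E r1E expr1.
move=> E0 E1; case/negP: pi_nunit; apply/unitrP; exists (y1 - y0).
have pi_y : pi * (y1 - y0) = 1 by rewrite mulrBr -E0 -E1; ring.
by rewrite mulrC pi_y.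
Qed.

Section Valuation.
Variables (R : idomainType) (pi : R).

Lemma ordge_nonpos (x : R) (r : rat) : r <= 0 -> ordge pi x r.
Proof. by exists 0%N; split=> //; exists x; rewrite expr0 mul1r. Qed.

Lemma ordge0 (r : rat) : ordge pi 0 r.
Proof.
by have [k rk] := exists_nat_ge r; exists k; split=> //; exists 0; rewrite mulr0.
Qed.

Lemma ordge_mulXn (m : nat) (x : R) (r : rat) :
  pi != 0 -> ordge pi (pi ^+ m * x) r -> ordge pi x (r - m%:R).
Proof.
move=> pi_neq0 [K [rK [y Ey]]]; have [mK|Km] := leqP m K.
  exists (K - m)%N; split; first by rewrite natrB //; lra.
  exists y; apply: (mulfI (expf_neq0 m pi_neq0)).
  by rewrite Ey mulrA -exprD subnKC.
by apply: ordge_nonpos; move: Km; rewrite -(ltr_nat rat); lra.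
Qed.

End Valuation.

Lemma ebasis_inM (n : nat) (R : idomainType) (pi : R) (J : countType)
    (v : mon n) (j2 : J) :
  inM pi (ebasis R v j2).
Proof.
move=> k; exists [:: (v, j2)] => -[w j]; rewrite inE /ebasis /=.
case: ifP => [/andP[/eqP-> /eqP->]|_ _]; first by rewrite eqxx.
by exists 0; rewrite mulr0.
Qed.

Lemma scaled_ebasis_inMbc (n : nat) (R : idomainType) (pi : R) (J : countType)
    (b c : rat) (m : nat) (v : mon n) (j2 : J) :
  b * (mdeg v)%:R + c <= m%:R ->
  inMbc pi b c (fun j w => pi ^+ m * ebasis R v j2 j w).
Proof.
move=> bcm; split.
  move=> k; have [s Ps] := ebasis_inM pi v j2 k.
  by exists s => p /Ps[y ->]; exists (pi ^+ m * y); rewrite mulrCA.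
move=> j w; rewrite /ebasis; case: ifP => [/andP[_ /eqP->]|_].
  by exists m; split=> //; exists 1; rewrite !mulr1.
by rewrite mulr0; exact: ordge0.
Qed.

Section DworkMatrix.
Variables (n : nat) (R : idomainType) (pi : R) (J : countType).
Variable Theta : Mel n R J -> Mel n R J.
Hypothesis pi_neq0 : pi != 0.

Lemma Gmat_ordK_ge (b : nat) u j1 v j2 (r C : rat) :
  ordge pi (Gstar Theta u j1 v j2) r ->
  C <= r + (b * mdeg v)%:R - (b * mdeg u)%:R ->
  ordK_ge pi (Gmat pi Theta b u j1 v j2) C.
Proof.
move=> [k [rk [y Ey]]] Cr.
exists (k%:Z + (b * mdeg v)%:Z - (b * mdeg u)%:Z), y; split.
  have tpi_neq0 : toK pi != 0 by rewrite /toK tofrac_eq.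
  rewrite /Gmat Ey /toK !rmorphM !rmorphXn /= -/(toK pi).
  rewrite !expfzDr // -[toK pi ^ k]/(toK pi ^+ k).
  rewrite -[toK pi ^ (b * mdeg v)]/(toK pi ^+ (b * mdeg v)).
  by rewrite mulrA mulrAC [toK pi ^+ _ * _]mulrC exprnN.
by apply: (ordge_nonpos pi y); rewrite !intrD intrN /=; lra.
Qed.

Lemma Gstar_ordge_contract (b c b' c' : rat) (m : nat) u j1 v j2 :
  (forall (r : R) F, inM pi F -> forall j w,
     Theta (fun j' w' => r * F j' w') j w = r * Theta F j w) ->
  (forall F, inMbc pi b c F -> inMbc pi b' c' (Theta F)) ->
  b * (mdeg v)%:R + c <= m%:R ->
  ordge pi (Gstar Theta u j1 v j2) (b' * (mdeg u)%:R + c' - m%:R).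
Proof.
move=> Theta_scale Theta_contract bcm; apply: ordge_mulXn => //.
have [_ Theta_L] := Theta_contract _ (scaled_ebasis_inMbc pi j2 bcm).
by rewrite /Gstar -Theta_scale //; [exact: Theta_L | exact: ebasis_inM].
Qed.

Lemma Gmat_cofin_row (b : nat) (u : mon n) (C : rat) :
  nuclear pi Theta -> (0 < b)%N ->
  cofin (fun j1 => forall v j2, ordK_ge pi (Gmat pi Theta b u j1 v j2) C).
Proof.
move=> Theta_nuclear b_gt0.
have [V CV] := exists_nat_ge (C + (b * mdeg u)%:R).
have [small smallP] := mdeg_lt_finite n V.
have [t Pt] := @cofin_forall_in _ _ small
  (fun (v : mon n) (j1 : J) =>
     forall j2 : J, Defs.pdiv pi V (Gstar Theta u j1 v j2))
  (fun v _ => Theta_nuclear u v V).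
exists t => j1 j1Nt v j2; have [vV|Vv] := ltnP (mdeg v) V.
  apply: (Gmat_ordK_ge (r := V%:R)); last by have := ler0n rat (b * mdeg v); lra.
  by exists V; split=> //; exact: Pt _ j1Nt _ (smallP _ vV) j2.
apply: (Gmat_ordK_ge (ordge_nonpos pi _ (lexx 0))).
have : (V <= b * mdeg v)%N by apply: leq_trans Vv _; rewrite leq_pmull.
rewrite -(ler_nat rat); lra.
Qed.

End DworkMatrix.

Theorem lemma4p11
  (n : nat) (Hn : (0 < n)%N)
  (R : idomainType) (pi : R) (q : nat) (HR : is_cdvr pi q)
  (J : countType)
  (sigma : ps n R -> ps n R) (f : 'I_n -> ps n R)
  (Hf : forall i, inA pi (f i))
  (Hsigma : is_frob pi q sigma f)
  (bsig : rat) (Hbsig : 0 < bsig)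
  (HbsigL : forall i, inL pi bsig 0 (fun u => pi * f i u))
  (Theta : Mel n R J -> Mel n R J)
  (HTheta : dwork_op pi sigma Theta)
  (Hnuc : nuclear pi Theta)
  (Hcontr : contracting pi q Theta)
  (b : nat) (Hb : (0 < b)%N) (Hbb : b%:R <= bsig)
  (c c1 : rat)
  (Hbc : forall F, inMbc pi b%:R c F -> inMbc pi (q%:R * b%:R) (c + c1) (Theta F)) :
  forall C : rat, 0 < C ->
    cofin (fun p : mon n * J =>
      forall (v : mon n) (j2 : J), ordK_ge pi (Gmat pi Theta b p.1 p.2 v j2) C).
Proof.
move=> C _.
have pi_neq0 : pi != 0 by case: HR.
have q_gt1 := is_cdvr_q_gt1 HR.
have [_ [_ [Theta_scale _]]] := HTheta.
have [k ck] := exists_nat_ge c.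
have [U CU] := exists_nat_ge (C - c - c1 + k%:R).
have [small smallP] := mdeg_lt_finite n U.
apply: (@cofin_pair _ _ small) => [u uNsmall j1 v j2 /=|u _]; last first.
  exact: Gmat_cofin_row.
have Uu : (U <= mdeg u)%N by rewrite leqNgt; apply: contra uNsmall; exact: smallP.
have growth : (b * mdeg u + mdeg u <= q * b * mdeg u)%N by nia.
move: Uu growth; rewrite -!(ler_nat rat) natrD !natrM => Uu growth.
apply: (Gmat_ordK_ge pi_neq0
         (r := q%:R * b%:R * (mdeg u)%:R + (c + c1) - (b * mdeg v + k)%N%:R)).
  apply: (Gstar_ordge_contract pi_neq0 u j1 j2 Theta_scale Hbc).
  by rewrite natrD natrM; lra.
by rewrite natrD !natrM; lra.
Qed.
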